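(* For each $\kappa>0$ there exists a constant $D_{\min}(\kappa)$ such that for all $D<D_{\min}(\kappa)$ (with $D>0$) one has $\inf_{\varphi\in W^{1,2}(\mathbb{T})}\mathcal J(\varphi)<-\kappa^2/2$.
   Context: $\mathbb{T}=[0,1]$ with endpoints identified; $D>0,\kappa>0$; $$\mathcal J(u)=\frac D2\int_0^1|u_x|^2dx+\frac12\int_0^1u^2dx-\kappa\log\Big(\int_0^1e^udx\Big),\qquad u\in W^{1,2}(\mathbb{T}).$$ Note that $\mathcal J(\kappa)=-\kappa^2/2$ for the constant function $\kappa$. *)

From HB Require Import structures.
From mathcomp Require Import all_boot all_order all_algebra.
From mathcomp Require Import all_classical all_reals all_analysis.
Set Implicit Arguments. Unset Strict Implicit. Unset Printing Implicit Defensive.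
Import Order.TTheory GRing.Theory Num.Theory.
Import numFieldNormedType.Exports.
Local Open Scope classical_set_scope.
Local Open Scope ring_scope.

Section Defs.
Variable R : realType.
Local Notation mu := (@lebesgue_measure R).

(* W^{1,2}(T), T = [0,1] with endpoints identified, in its 1-d description:
   u (on [0,1]) is an absolutely continuous function
   u(x) = u(0) + \int_0^x g with weak derivative g in L^2(0,1), and
   periodicity u(1) = u(0), i.e. \int_0^1 g = 0.
   [W12 u g] means: u is in W^{1,2}(T) and g is (a representative of) u_x. *)
Definition W12 (u g : R -> R) : Prop :=
  [/\ measurable_fun (`[0%R, 1%R] : set R) g,
      (\int[mu]_(x in (`[0%R, 1%R] : set R)) ((g x) ^+ 2)%:E < +oo)%E,
      Rintegral mu (`[0%R, 1%R] : set R) g = 0 &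
      forall x, 0 <= x <= 1 -> u x = u 0 + Rintegral mu (`[0%R, x] : set R) g ].

Definition Jfun (D kappa : R) (u g : R -> R) : R :=
  D / 2 * Rintegral mu (`[0%R, 1%R] : set R) (fun x => g x ^+ 2)
  + 1 / 2 * Rintegral mu (`[0%R, 1%R] : set R) (fun x => u x ^+ 2)
  - kappa * ln (Rintegral mu (`[0%R, 1%R] : set R) (fun x => expR (u x))).

Definition infJ (D kappa : R) : \bar R :=
  ereal_inf [set (Jfun D kappa p.1 p.2)%:E | p in [set p | W12 p.1 p.2]].

End Defs.

From HB Require Import structures.
From mathcomp Require Import all_boot all_order all_algebra.
From mathcomp Require Import all_classical all_reals all_analysis.
From mathcomp Require Import ring lra.
Import Order.TTheory GRing.Theory Num.Theory.
Import numFieldNormedType.Exports.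
Set Implicit Arguments. Unset Strict Implicit. Unset Printing Implicit Defensive.

Local Open Scope classical_set_scope.
Local Open Scope ring_scope.

(* Perturb the constant [kappa] by a bump concentrated near the identified
   endpoints: [u = kappa + ln (1 + b^2 (2x - 1)^(4m))].  Then
   [int exp u = e^kappa (1 + b^2 / (4m + 1))] exactly, so the logarithmic term
   gains [kappa ln (1 + b^2 / (4m + 1))], whereas [ln (1 + z^2) <= 2 z] bounds
   the extra cost in [1/2 int u^2] by [(2 kappa + ln (1 + b^2)) b / (2m + 1)].
   With [b = N^2] and [m = N^3] the gain grows like [kappa ln N] while the cost
   stays below [kappa + 2], so [J u < -kappa^2/2] at [D = 0]; the gradient term
   [D/2 int u_x^2] of this fixed [u] is then absorbed by taking [D] small. *)

Section Integrals.
Variable R : realType.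
Local Notation mu := (@lebesgue_measure R).

Lemma Rintegral_continuous_FTC2 (f F : R -> R) (a b : R) : a < b ->
  (forall x, is_derive x (1 : R) F (f x)) -> continuous f ->
  Rintegral mu `[a, b] f = F b - F a.
Proof.
move=> ab dF cf.
have cF : continuous F.
  by move=> x; apply/differentiable_continuous/derivable1_diffP; exact: ex_derive.
rewrite /Rintegral (@continuous_FTC2 _ f F a b ab) //.
- exact: continuous_subspaceT.
- split.
  + by move=> x _; exact: ex_derive.
  + exact/cvg_at_right_filter/cF.
  + exact/cvg_at_left_filter/cF.
- by move=> x _; rewrite derive1E derive_val.
Qed.

Lemma Rintegral_horner_deriv (p : {poly R}) (a b : R) : a < b ->
  Rintegral mu `[a, b] (horner p^`()) = p.[b] - p.[a].
Proof.
by move=> ab; apply: Rintegral_continuous_FTC2 => //; exact: continuous_horner.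
Qed.

Definition centered_poly : {poly R} := 'X *+ 2 - 1.

Lemma horner_centered x : centered_poly.[x] = x * 2 - 1.
Proof. by rewrite /centered_poly !hornerE mulr_natr mulr2n. Qed.

Lemma continuous_centered_pow (c d : R) n :
  continuous (fun x : R => c + d * (x * 2 - 1) ^+ n).
Proof.
have -> : (fun x : R => c + d * (x * 2 - 1) ^+ n) =
          horner (c%:P + d%:P * centered_poly ^+ n).
  by apply/funext => x; rewrite hornerD hornerC hornerM hornerC horner_exp horner_centered.
exact: continuous_horner.
Qed.

Lemma Rintegral_centered_even_pow (c d : R) k :
  Rintegral mu `[0, 1] (fun x => c + d * (x * 2 - 1) ^+ (2 * k)) =
  c + d / (2 * k + 1)%N%:R.
Proof.
have k_neq0 : 1 + 2 * k%:R != 0 :> R.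
  by apply/eqP; have : 0 <= k%:R :> R by []; lra.
have dT : centered_poly^`() = 2%:P.
  by rewrite derivB derivMn derivX derivC subr0 polyCMn.
pose p := c *: 'X + (d / (2 * (2 * k + 1))%:R) *: centered_poly ^+ (2 * k + 1).
have dp x : p^`().[x] = c + d * (x * 2 - 1) ^+ (2 * k).
  rewrite /p derivD !derivZ derivX deriv_exp dT addn1 /=.
  rewrite !hornerE hornerMn hornerM hornerC horner_exp horner_centered -mulr_natr natrM.
  by field.
transitivity (Rintegral mu `[0, 1] (horner p^`())).
  by apply: eq_Rintegral => x _; rewrite -dp.
rewrite Rintegral_horner_deriv ?ltr01 //.
rewrite /p !hornerE addrK expr1n exprD expr1 exprM sqrrN !expr1n natrM natrD.
by field.
Qed.

End Integrals.

Section Logarithm.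
Variable R : realType.

Lemma ler1Dexpr_expr1D (z : R) n : 0 <= z -> 1 + z ^+ n.+1 <= (1 + z) ^+ n.+1.
Proof.
move=> z0; elim: n => [|n IH]; first by rewrite !expr1.
have zn0 : 0 <= z ^+ n.+1 := exprn_ge0 _ z0.
have step : 1 + z ^+ n.+2 <= (1 + z) * (1 + z ^+ n.+1) by rewrite exprS; nra.
apply: (le_trans step); rewrite [X in _ <= X]exprS.
by apply: ler_wpM2l; [exact: addr_ge0 | exact: IH].
Qed.

Lemma ln1Dexpr_le (z : R) n : 0 <= z -> ln (1 + z ^+ n.+1) <= n.+1%:R * z.
Proof.
move=> z0; rewrite -ler_expR expRM_natl lnK ?posrE; last first.
  by rewrite ltr_pwDl // exprn_ge0.
apply: (le_trans (ler1Dexpr_expr1D n z0)).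
by rewrite lerXn2r ?nnegrE ?expR_ge1Dx // ?addr_ge0 // ltW ?expR_gt0.
Qed.

End Logarithm.

Section Bump.
Variable R : realType.
Local Notation mu := (@lebesgue_measure R).
Variables (kappa b : R) (m : nat).
Hypotheses (b_ge0 : 0 <= b) (kappa_ge0 : 0 <= kappa).

Definition bump_poly : {poly R} := 1 + (b ^+ 2)%:P * centered_poly R ^+ (2 * (2 * m)).

Definition bump_fun (x : R) : R := kappa + ln bump_poly.[x].

Definition bump_deriv (x : R) : R := bump_poly^`().[x] / bump_poly.[x].

Definition bump_gain : R :=
  kappa * ln (1 + b ^+ 2 / (2 * (2 * m) + 1)%N%:R)
  - (2 * kappa + ln (1 + b ^+ 2)) * b / (2 * m + 1)%N%:R.

Lemma horner_bump x : bump_poly.[x] = 1 + b ^+ 2 * (x * 2 - 1) ^+ (2 * (2 * m)).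
Proof. by rewrite /bump_poly hornerD hornerC hornerM hornerC horner_exp horner_centered. Qed.

Lemma bump_gt0 x : 0 < bump_poly.[x].
Proof.
rewrite horner_bump (lt_le_trans ltr01) // lerDl.
by rewrite mulr_ge0 ?sqr_ge0 ?exprn_even_ge0 // oddM.
Qed.

Lemma is_derive_bump_fun x : is_derive x (1 : R) bump_fun (bump_deriv x).
Proof.
have dln : is_derive x (1 : R) (@ln R \o horner bump_poly)
    (bump_poly.[x]^-1 * bump_poly^`().[x]).
  exact: is_derive1_comp (is_derive1_ln (bump_gt0 x)) (is_derive_poly _ _).
by rewrite /bump_deriv mulrC -[X in is_derive _ _ _ X]add0r; exact: is_deriveD.
Qed.

Lemma continuous_bump_fun : continuous bump_fun.
Proof.
move=> x; apply/differentiable_continuous/derivable1_diffP.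
by case: (is_derive_bump_fun x).
Qed.

Lemma continuous_bump_deriv : continuous bump_deriv.
Proof.
move=> x; apply: continuousM; first exact: continuous_horner.
by apply: continuousV; [rewrite gt_eqF ?bump_gt0 | exact: continuous_horner].
Qed.

Lemma bump_fun_periodic : bump_fun 1 = bump_fun 0.
Proof.
have two_minus_one : 2 - 1 = 1 :> R by lra.
by rewrite /bump_fun !horner_bump mul1r mul0r sub0r two_minus_one !exprM sqrrN !expr1n.
Qed.

Lemma W12_bump : W12 bump_fun bump_deriv.
Proof.
have FTC := Rintegral_continuous_FTC2 _ is_derive_bump_fun continuous_bump_deriv.
split.
- apply: measurable_funS (measurable_realfun.continuous_measurable_fun
    continuous_bump_deriv) => //.
- have cg2 : continuous (fun x => bump_deriv x ^+ 2).
    by move=> x; apply: continuousM; exact: continuous_bump_deriv.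
  have /integrableP[_] := continuous_compact_integrable (@segment_compact R 0 1)
    (continuous_subspaceT cg2).
  apply: le_lt_trans; rewrite le_eqVlt; apply/predU1l/eq_integral => x _ /=.
  by rewrite ger0_norm // sqr_ge0.
- by rewrite FTC ?ltr01 // bump_fun_periodic subrr.
- move=> x /andP[x0 x1]; have [->|xn0] := eqVneq x 0.
    by rewrite set_itv1 Rintegral_set1 addr0.
  by rewrite FTC ?lt_neqAle 1?eq_sym ?xn0 // addrC subrK.
Qed.

Lemma Rintegral_expR_bump_fun :
  Rintegral mu `[0, 1] (fun x => expR (bump_fun x)) =
  expR kappa * (1 + b ^+ 2 / (2 * (2 * m) + 1)%N%:R).
Proof.
transitivity (Rintegral mu `[0, 1] (fun x => expR kappa +
    (expR kappa * b ^+ 2) * (x * 2 - 1) ^+ (2 * (2 * m)))).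
  apply: eq_Rintegral => x _.
  by rewrite /bump_fun expRD lnK ?posrE ?bump_gt0 // horner_bump; ring.
by rewrite Rintegral_centered_even_pow mulrDr mulr1 mulrA.
Qed.

Lemma bump_fun_sqr_le x : 0 <= x <= 1 ->
  bump_fun x ^+ 2 <=
  kappa ^+ 2 + (2 * kappa + ln (1 + b ^+ 2)) * (2 * b) * (x * 2 - 1) ^+ (2 * m).
Proof.
move=> /andP[x0 x1].
set L := ln (1 + b ^+ 2); set w := (x * 2 - 1) ^+ (2 * m).
have w0 : 0 <= w by rewrite exprn_even_ge0 // oddM.
have w1 : w <= 1.
  have sq1 : (x * 2 - 1) ^+ 2 <= 1 by rewrite expr2; nra.
  by rewrite /w exprM exprn_ile1 ?sqr_ge0.
set z := b * w.
have z0 : 0 <= z by rewrite mulr_ge0.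
have zb : z <= b by rewrite ler_piMr.
set v := ln bump_poly.[x].
have bump_z : bump_poly.[x] = 1 + z ^+ 2.
  by rewrite horner_bump /z /w exprMn -exprM mulnC.
have v0 : 0 <= v by rewrite /v ln_ge0 // bump_z lerDl sqr_ge0.
have vL : v <= L.
  rewrite /v /L ler_ln ?posrE ?bump_gt0 ?ltr_pwDl ?sqr_ge0 //.
  by rewrite bump_z lerD2l lerXn2r ?nnegrE.
have vz : v <= 2 * z by rewrite /v bump_z (ln1Dexpr_le 1 z0).
have -> : (2 * kappa + L) * (2 * b) * w = (2 * kappa + L) * (2 * z).
  by rewrite /z; ring.
rewrite /bump_fun -/v.
have L0 : 0 <= L := le_trans v0 vL.
have h1 : 0 <= v * (L - v) by rewrite mulr_ge0 // subr_ge0.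
have h2 : 0 <= (2 * kappa + L) * (2 * z - v).
  by apply: mulr_ge0; rewrite ?subr_ge0 ?addr_ge0 ?mulr_ge0.
nra.
Qed.

Lemma Rintegral_bump_fun_sqr_le :
  Rintegral mu `[0, 1] (fun x => bump_fun x ^+ 2) <=
  kappa ^+ 2 + (2 * kappa + ln (1 + b ^+ 2)) * (2 * b) / (2 * m + 1)%N%:R.
Proof.
rewrite -Rintegral_centered_even_pow; apply: le_Rintegral => //.
- apply: continuous_compact_integrable; first exact: segment_compact.
  by apply: continuous_subspaceT => x; apply: continuousM; exact: continuous_bump_fun.
- apply: continuous_compact_integrable; first exact: segment_compact.
  exact/continuous_subspaceT/continuous_centered_pow.
- by move=> x; rewrite /= in_itv /=; exact: bump_fun_sqr_le.
Qed.

Lemma Jfun_bump_le D : Jfun D kappa bump_fun bump_deriv <=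
  - (kappa ^+ 2 / 2) + D / 2 * Rintegral mu `[0, 1] (fun x => bump_deriv x ^+ 2)
  - bump_gain.
Proof.
have Q0 : 0 < 1 + b ^+ 2 / (2 * (2 * m) + 1)%N%:R.
  by rewrite (lt_le_trans ltr01) // lerDl divr_ge0 ?sqr_ge0.
rewrite /Jfun /bump_gain Rintegral_expR_bump_fun lnM ?posrE ?expR_gt0 // expRK.
have := Rintegral_bump_fun_sqr_le.
set A := (2 * kappa + ln (1 + b ^+ 2)); set n := (2 * m + 1)%N%:R.
have -> : A * (2 * b) / n = 2 * (A * b / n) by ring.
lra.
Qed.

End Bump.

Section BumpParameters.
Variable R : realType.

Lemma bump_gain_ge (kappa : R) N : 0 <= kappa -> (0 < N)%N ->
  kappa * ln (1 + N%:R / 5) - (kappa + 2) <= bump_gain kappa (N%:R ^+ 2) (N ^ 3)%N.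
Proof.
move=> k0 N0; set r : R := N%:R.
have r1 : 1 <= r by rewrite /r ler1n.
have r2 : 0 <= r ^+ 2 := sqr_ge0 r.
have r23 : r ^+ 2 <= r ^+ 3 by rewrite [r ^+ 3]exprS ler_peMl.
have n2 : (2 * N ^ 3 + 1)%N%:R = 2 * r ^+ 3 + 1 :> R.
  by rewrite /r natrD !natrM; ring.
have n4 : (2 * (2 * N ^ 3) + 1)%N%:R = 4 * r ^+ 3 + 1 :> R.
  by rewrite /r natrD !natrM; ring.
have L4 : ln (1 + r ^+ 2 ^+ 2) <= 4 * r by rewrite -exprM; exact: (ln1Dexpr_le 3).
have cost : (2 * kappa + ln (1 + r ^+ 2 ^+ 2)) * r ^+ 2 / (2 * r ^+ 3 + 1) <= kappa + 2.
  rewrite ler_pdivrMr; last by rewrite ltr_pwDr // mulr_ge0 // exprn_ge0 // (le_trans ler01).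
  have : ln (1 + r ^+ 2 ^+ 2) * r ^+ 2 <= 4 * r ^+ 3.
    by rewrite [r ^+ 3]exprS mulrA; apply: ler_wpM2r.
  set l := ln _ => hl; have hk := ler_wpM2l k0 r23; nra.
have gain : ln (1 + r / 5) <= ln (1 + r ^+ 2 ^+ 2 / (4 * r ^+ 3 + 1)).
  have q3 : 0 < 4 * r ^+ 3 + 1 by rewrite ltr_pwDr // mulr_ge0 // exprn_ge0 // (le_trans ler01).
  have rq : r / 5 <= r ^+ 2 ^+ 2 / (4 * r ^+ 3 + 1).
    by rewrite ler_pdivrMr // mulrAC ler_pdivlMr // -exprM; nra.
  have p1 : 0 < 1 + r / 5 by lra.
  by rewrite ler_ln ?posrE ?lerD2l //; lra.
rewrite /bump_gain n2 n4; have := ler_wpM2l k0 gain; lra.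
Qed.

Lemma exists_bump_gain_gt0 (kappa : R) : 0 < kappa ->
  exists b m, 0 <= b /\ 0 < bump_gain kappa b m.
Proof.
move=> k0; set C := 1 + 2 / kappa.
set N := (Num.Def.trunc (5 * expR C)).+1.
have NC : 5 * expR C < N%:R := truncnS_gt _.
exists (N%:R ^+ 2), (N ^ 3)%N; split; first exact: sqr_ge0.
apply: (lt_le_trans _ (bump_gain_ge (ltW k0) (ltn0Sn _))).
have lnC : C < ln (1 + N%:R / 5).
  rewrite -ltr_expR lnK ?posrE ?ltr_pwDl ?divr_ge0 //; have := expR_gt0 C; lra.
have kC : kappa * C = kappa + 2 by rewrite /C; field; rewrite gt_eqF.
have : kappa * C < kappa * ln (1 + N%:R / 5) by rewrite ltr_pM2l.
lra.
Qed.

End BumpParameters.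

Theorem mainTheorem4 (R : realType) (kappa : R) :
  0 < kappa ->
  exists Dmin : R, 0 < Dmin /\
    forall D : R, 0 < D -> D < Dmin ->
      (infJ D kappa < (- (kappa ^+ 2 / 2))%:E)%E.
Proof.
move=> k0; have [b [m [b0 gain0]]] := exists_bump_gain_gt0 k0.
set G := Rintegral (@lebesgue_measure R) `[0, 1] (fun x => bump_deriv b m x ^+ 2).
have G1 : 0 < G + 1.
  by rewrite ltr_pwDr // Rintegral_ge0 // => x _; exact: sqr_ge0.
exists (bump_gain kappa b m / (G + 1)); split; first exact: divr_gt0.
move=> D D0; rewrite ltr_pdivlMr // => DG.
apply: (@le_lt_trans _ _ (Jfun D kappa (bump_fun kappa b m) (bump_deriv b m))%:E).
  by apply: ereal_inf_lbound; exists (bump_fun kappa b m, bump_deriv b m) => //; exact: W12_bump.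
rewrite lte_fin; have := Jfun_bump_le m b0 (ltW k0) D; rewrite -/G.
lra.
Qed.
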